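(* Let $g\colon(0,1)\to\mathbb{R}$ be a continuous, strictly increasing function such that $g(1-a)=-g(a)$ for all $a\in(0,1)$ and $\lim_{a\to0^+}g(a)=-\infty$, and let $J(a,b)=g^{-1}\bigl(g(a)-g(b)\bigr)$ for $(a,b)\in S=(0,1)\times(0,1)$. Suppose $J$ is differentiable on $S$. Then for any $0<c<1$, the level curve $\{(a,b)\in S : J(a,b)=c\}$ is the graph of the unique solution $b=b(a)$, $0<a<1$, of the differential equation \[ \frac{db}{da}=\frac{g'(a)}{g'(b)} \] that passes through the point $(c,\tfrac12)$. *)

From Stdlib Require Import Reals.
From Coquelicot Require Import Coquelicot.
Open Scope R_scope.

Definition in01 (x : R) : Prop := 0 < x < 1.

Definition ode_solution (g b : R -> R) (c : R) : Prop :=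
  (forall a, in01 a -> in01 (b a) /\ is_derive b a (Derive g a / Derive g (b a)))
  /\ b c = 1/2.

(* The level curve J(a,y) = c is the graph of a |-> J(a,c), because g(J(a,y)) = g a - g y
   and g is injective.  Differentiating g(J(a,c)) = g a - g c gives
   g'(J(a,c)) * dJ/da = g'(a), so a |-> J(a,c) solves the ODE once g' never vanishes; and
   g' cannot vanish at some y, since with z = J(x,y) one has J(x,z) = y, and the same identity
   at (x,z) would force g' = 0 on all of (0,1), contradicting strict monotonicity.
   Uniqueness: along any solution b, g(b(a)) - g(a) has zero derivative, hence equals its
   value -g(c) at a = c, which pins b(a) down to J(a,c). *)
From Stdlib Require Import Reals Lra.
From Coquelicot Require Import Coquelicot.
Open Scope R_scope.

Lemma locally_in01 x : in01 x -> locally x in01.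
Proof.
  intros Hx. apply (open_and (fun u => 0 < u) (fun u => u < 1));
    [apply open_gt | apply open_lt | exact Hx].
Qed.

Lemma in01_between a b x :
  in01 a -> in01 b -> Rmin a b <= x <= Rmax a b -> in01 x.
Proof.
  unfold in01; intros Ha Hb Hx.
  assert (0 < Rmin a b) by (apply Rmin_glb_lt; lra).
  assert (Rmax a b < 1) by (apply Rmax_lub_lt; lra).
  lra.
Qed.

Lemma in01_derive0_const (f : R -> R) :
  (forall t, in01 t -> is_derive f t 0) ->
  forall a b, in01 a -> in01 b -> f a = f b.
Proof.
  intros Df a b Ha Hb.
  destruct (MVT_gen f a b (fun _ => 0)) as [d [_ Ed]].
  - intros x Hx. apply Df, (in01_between a b); [exact Ha | exact Hb | lra].
  - intros x Hx. apply continuity_pt_filterlim, (ex_derive_continuous f).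
    exists 0. apply Df, (in01_between a b x Ha Hb Hx).
  - lra.
Qed.

Section LevelCurves.

Variables (g : R -> R) (J : R -> R -> R).

Hypothesis g_incr : forall x y, in01 x -> in01 y -> x < y -> g x < g y.
Hypothesis g_diff : forall x, in01 x -> ex_derive g x.
Hypothesis J_def :
  forall a b, in01 a -> in01 b -> in01 (J a b) /\ g (J a b) = g a - g b.
Hypothesis J_diff : forall a b, in01 a -> in01 b -> differentiable_pt J a b.

Lemma g_inj x y : in01 x -> in01 y -> g x = g y -> x = y.
Proof.
  intros Hx Hy E. destruct (Rtotal_order x y) as [H|[H|H]]; [| exact H |].
  - specialize (g_incr _ _ Hx Hy H); lra.
  - specialize (g_incr _ _ Hy Hx H); lra.
Qed.

Lemma J_in01 a b : in01 a -> in01 b -> in01 (J a b).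
Proof. intros Ha Hb. apply (J_def a b Ha Hb). Qed.

Lemma g_J a b : in01 a -> in01 b -> g (J a b) = g a - g b.
Proof. intros Ha Hb. apply (J_def a b Ha Hb). Qed.

Lemma J_eq_iff a y c :
  in01 a -> in01 y -> in01 c -> J a y = c <-> y = J a c.
Proof.
  intros Ha Hy Hc. split.
  - intros E. apply g_inj; [exact Hy | apply J_in01; auto |].
    rewrite g_J, <- E, g_J by auto. ring.
  - intros ->. apply g_inj; [apply J_in01; auto; apply J_in01; auto | exact Hc |].
    rewrite !g_J by (auto; apply J_in01; auto). ring.
Qed.

Lemma J_J x y : in01 x -> in01 y -> J x (J x y) = y.
Proof. intros Hx Hy. symmetry. apply J_eq_iff; auto. apply J_in01; auto. Qed.

Lemma J_self a : g (1/2) = 0 -> in01 a -> J a a = 1/2.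
Proof.
  intros g_half Ha. apply g_inj; [apply J_in01; auto | unfold in01; lra |].
  rewrite g_J, g_half by auto. ring.
Qed.

Lemma ex_derive_J_l x z : in01 x -> in01 z -> ex_derive (fun t => J t z) x.
Proof.
  intros Hx Hz. destruct (J_diff x z Hx Hz) as [lx [ly H]].
  exists (lx * 1 + ly * 0). apply is_derive_Reals.
  apply (derivable_pt_lim_comp_2d J (fun t => t) (fun _ => z));
    [exact H | apply derivable_pt_lim_id | apply derivable_pt_lim_const].
Qed.

Lemma Derive_g_J_mul x z l :
  in01 x -> in01 z -> is_derive (fun t => J t z) x l ->
  Derive g (J x z) * l = Derive g x.
Proof.
  intros Hx Hz Hl.
  assert (Dcomp : is_derive (fun t => g (J t z)) x (scal l (Derive g (J x z)))).
  { apply (is_derive_comp g (fun t => J t z)); [| exact Hl].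
    apply Derive_correct, g_diff, J_in01; auto. }
  assert (Ddiff : is_derive (fun t => g (J t z)) x (Derive g x)).
  { apply (is_derive_ext_loc (fun t => g t - g z)).
    - apply (filter_imp in01); [| exact (locally_in01 x Hx)].
      intros t Ht. symmetry. apply g_J; auto.
    - replace (Derive g x) with (Derive g x - 0) by ring.
      apply (is_derive_minus g (fun _ => g z)).
      + apply Derive_correct, g_diff; auto.
      + exact (is_derive_const (g z) x). }
  apply is_derive_unique in Dcomp. apply is_derive_unique in Ddiff.
  rewrite Dcomp in Ddiff. rewrite <- Ddiff. unfold scal; simpl; unfold mult; simpl. ring.
Qed.

Lemma Derive_g_neq0 y : in01 y -> Derive g y <> 0.
Proof.
  intros Hy E.
  assert (g'_0 : forall x, in01 x -> is_derive g x 0).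
  { intros x Hx. set (z := J x y).
    assert (Hz : in01 z) by (apply J_in01; auto).
    destruct (ex_derive_J_l x z Hx Hz) as [l Hl].
    pose proof (Derive_g_J_mul x z l Hx Hz Hl) as Dx.
    unfold z in Dx. rewrite (J_J x y Hx Hy), E, Rmult_0_l in Dx.
    rewrite Dx. apply Derive_correct, g_diff; auto. }
  assert (Hq : in01 (1/4)) by (unfold in01; lra).
  assert (Hh : in01 (1/2)) by (unfold in01; lra).
  pose proof (g_incr _ _ Hq Hh ltac:(lra)) as Hlt.
  rewrite (in01_derive0_const g g'_0 (1/4) (1/2) Hq Hh) in Hlt. lra.
Qed.

Lemma is_derive_J_l a c :
  in01 a -> in01 c ->
  is_derive (fun t => J t c) a (Derive g a / Derive g (J a c)).
Proof.
  intros Ha Hc. destruct (ex_derive_J_l a c Ha Hc) as [l Hl]; change R in l.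
  replace (Derive g a / Derive g (J a c)) with l; [exact Hl |].
  rewrite <- (Derive_g_J_mul a c l Ha Hc Hl). field.
  apply Derive_g_neq0, J_in01; auto.
Qed.

Lemma ode_solution_eq_J (b : R -> R) c :
  g (1/2) = 0 -> in01 c -> ode_solution g b c ->
  forall a, in01 a -> b a = J a c.
Proof.
  intros g_half Hc [Db b_c] a Ha.
  assert (Dh : forall t, in01 t -> is_derive (fun t => g (b t) - g t) t 0).
  { intros t Ht. destruct (Db t Ht) as [Hbt Dbt].
    replace 0 with (scal (Derive g t / Derive g (b t)) (Derive g (b t)) - Derive g t)
      by (unfold scal; simpl; unfold mult; simpl; field; apply Derive_g_neq0; auto).
    apply (is_derive_minus (fun t => g (b t)) g).
    - apply (is_derive_comp g b); [apply Derive_correct, g_diff; auto | exact Dbt].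
    - apply Derive_correct, g_diff; auto. }
  pose proof (in01_derive0_const _ Dh a c Ha Hc) as Eh.
  simpl in Eh. rewrite b_c, g_half in Eh.
  destruct (Db a Ha) as [Hba _].
  apply g_inj; [exact Hba | apply J_in01; auto |].
  rewrite g_J by auto. lra.
Qed.

End LevelCurves.

Theorem proposition5p9 (g : R -> R) (J : R -> R -> R)
  (g_cont : forall x, in01 x -> continuity_pt g x)
  (g_incr : forall x y, in01 x -> in01 y -> x < y -> g x < g y)
  (g_sym : forall a, in01 a -> g (1 - a) = - g a)
  (g_lim : filterlim g (at_right 0) (Rbar_locally m_infty))
  (g_diff : forall x, in01 x -> ex_derive g x)
  (J_def : forall a b, in01 a -> in01 b -> in01 (J a b) /\ g (J a b) = g a - g b)
  (J_diff : forall a b, in01 a -> in01 b -> differentiable_pt J a b) :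
  forall c, in01 c ->
    exists b : R -> R,
      ode_solution g b c
      /\ (forall b' : R -> R, ode_solution g b' c -> forall a, in01 a -> b' a = b a)
      /\ (forall a y, in01 a -> in01 y -> (J a y = c <-> y = b a)).
Proof.
  intros c Hc.
  assert (Hh : in01 (1/2)) by (unfold in01; lra).
  assert (g_half : g (1/2) = 0).
  { pose proof (g_sym (1/2) Hh) as E. replace (1 - 1/2) with (1/2) in E by field. lra. }
  exists (fun a => J a c). split; [split | split].
  - intros a Ha. split; [apply (J_in01 g J J_def); auto |].
    apply (is_derive_J_l g J g_incr g_diff J_def J_diff); auto.
  - exact (J_self g J g_incr J_def c g_half Hc).
  - intros b' Hb'.
    exact (ode_solution_eq_J g J g_incr g_diff J_def J_diff b' c g_half Hc Hb').
  - intros a y Ha Hy. exact (J_eq_iff g J g_incr J_def a y c Ha Hy Hc).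
Qed.
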